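(* Let $G$ be a finite simple graph that contains a subdivision of $K_4^-$ as a subgraph. Then $S(G)$ contains a subdivision of $K_{3,3}$ as a subgraph.
   Context: $K_4^-$ denotes the complete graph $K_4$ with one edge removed (the diamond graph). A subdivision of a graph $F$ is a graph obtained from $F$ by replacing edges with internally vertex-disjoint paths. For a graph $G$, the great shadow $S(G)$ is the graph obtained from $G$ by adding, for each vertex $v$ of $G$, a new vertex $v'$ (the shadow vertex of $v$) and making $v'$ adjacent to $v$ and to every neighbor of $v$ in $G$; no other edges are added. *)

From mathcomp Require Import all_boot.
Set Implicit Arguments. Unset Strict Implicit. Unset Printing Implicit Defensive.

Definition simple_graph (T : finType) (e : rel T) : Prop :=
  symmetric e /\ irreflexive e.

(* interior vertices of the path x :: q (all but first and last) *)
Definition interior (T : Type) (q : seq T) : seq T := take (size q).-1 q.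

(* G = (T,e) contains a subdivision of F = (V,f) as a subgraph:
   branch vertices phi (injective); for each edge ab of F a path
   phi a :: P a b from phi a to phi b in G (simple); the interiors of
   these paths avoid all branch vertices and interiors of paths of
   distinct edges are disjoint. *)
Definition contains_subdivision (V : finType) (f : rel V)
    (T : finType) (e : rel T) : Prop :=
  exists (phi : V -> T) (P : V -> V -> seq T),
    [/\ injective phi,
        (forall a b, f a b ->
           [/\ path e (phi a) (P a b), last (phi a) (P a b) = phi b
             & uniq (phi a :: P a b)]),
        (forall a b v, f a b -> phi v \notin interior (P a b))
      & (forall a b c d, f a b -> f c d ->
           ~ ((a = c /\ b = d) \/ (a = d /\ b = c)) ->
           forall x, x \in interior (P a b) -> x \notin interior (P c d))].

Definition K4minus : rel 'I_4 :=
  fun a b => (a != b) &&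
    ~~ (((a == 2 :> nat) && (b == 3 :> nat)) || ((a == 3 :> nat) && (b == 2 :> nat))).

Definition K33 : rel 'I_6 := fun a b => (a < 3) != (b < 3).

(* Great shadow S(G): vertices inl v (original) and inr v (shadow v');
   v' adjacent to v and to every neighbour of v. *)
Definition shadow_rel (T : finType) (e : rel T) : rel (T + T) :=
  fun x y => match x, y with
  | inl u, inl v => e u v
  | inl u, inr v => (u == v) || e v u
  | inr u, inl v => (u == v) || e u v
  | inr _, inr _ => false
  end.

(* The subdivision of K_4^- yields three internally disjoint paths between the
   two branch vertices u and w of degree three, at most one of which is the
   single edge uw; let b_1, b_2, b_3 be the successors of u on them. In S(G),
   take u, u', w' on one side and b_1, b_2, b_3 on the other: u and u' are
   adjacent to every b_i, and w', being adjacent to every neighbour of w,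
   reaches b_i by walking the i-th path backwards. These nine paths meet only
   at their ends, so they form a subdivision of K_{3,3}. *)

From mathcomp Require Import all_boot.
Set Implicit Arguments. Unset Strict Implicit. Unset Printing Implicit Defensive.

Section Interior.
Variable S : Type.
Implicit Types (x z : S) (p s : seq S).

Lemma interior_rcons s z : interior (rcons s z) = s.
Proof. by rewrite /interior size_rcons -cats1 take_size_cat. Qed.

Lemma interior_rev_belast x p : interior (rev (belast x p)) = rev (interior p).
Proof. by case/lastP: p => [|p z] //; rewrite belast_rcons rev_cons !interior_rcons. Qed.

Lemma rev_cons_belast x p : last x p :: rev (belast x p) = rev (x :: p).
Proof. by rewrite [x :: p]lastI rev_rcons. Qed.

Lemma last_rev_belast x p : last (last x p) (rev (belast x p)) = x.
Proof. by rewrite -(last_cons x) rev_cons_belast rev_cons last_rcons. Qed.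

Lemma path_rev_belast (e : rel S) x p :
  symmetric e -> path e (last x p) (rev (belast x p)) = path e x p.
Proof. by move=> e_sym; rewrite rev_path (eq_path e_sym). Qed.

End Interior.

Section EqInterior.
Variable S : eqType.
Implicit Types (x z : S) (p : seq S).

Lemma mem_interior x p z :
  uniq p -> (z \in interior p) = (z \in p) && (z != last x p).
Proof.
case/lastP: p => [|p y] //; rewrite interior_rcons last_rcons mem_rcons in_cons.
rewrite rcons_uniq => /andP[yNp _].
by case: (eqVneq z y) => [->|]; rewrite ?(negbTE yNp) ?andbT.
Qed.

Lemma uniq_rev_belast x p : uniq (last x p :: rev (belast x p)) = uniq (x :: p).
Proof. by rewrite rev_cons_belast rev_uniq. Qed.

End EqInterior.

Section K33Subdivision.
Variables (S : finType) (g : rel S).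
Hypothesis g_sym : symmetric g.
Variables (x y : 'I_3 -> S) (Q : 'I_3 -> 'I_3 -> seq S).
Hypotheses (x_inj : injective x) (y_inj : injective y) (xNy : forall i j, x i != y j).
Hypothesis Q_path : forall i j,
  [/\ path g (x i) (Q i j), last (x i) (Q i j) = y j & uniq (x i :: Q i j)].
Hypothesis x_notin_Q : forall i j v, x v \notin interior (Q i j).
Hypothesis y_notin_Q : forall i j v, y v \notin interior (Q i j).
Hypothesis Q_disjoint : forall i j i' j', (i, j) != (i', j') ->
  forall z, z \in interior (Q i j) -> z \notin interior (Q i' j').

Lemma K33_edge_shifts (a b : 'I_6) : K33 a b -> exists i j,
  (a, b) = (@lshift 3 3 i, @rshift 3 3 j) \/ (a, b) = (@rshift 3 3 j, @lshift 3 3 i).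
Proof.
rewrite /K33; case: (@split_ordP 3 3 a) => i ->; case: (@split_ordP 3 3 b) => j -> //= _.
  by exists i, j; left.
by exists j, i; right.
Qed.

Let split_lshift i : @split 3 3 (@lshift 3 3 i) = inl i := unsplitK (inl i).
Let split_rshift j : @split 3 3 (@rshift 3 3 j) = inr j := unsplitK (inr j).

Definition K33_branch (a : 'I_6) : S :=
  match @split 3 3 a with inl i => x i | inr j => y j end.

Definition K33_path (a b : 'I_6) : seq S :=
  match @split 3 3 a, @split 3 3 b with
  | inl i, inr j => Q i j
  | inr j, inl i => rev (belast (x i) (Q i j))
  | _, _ => [::]
  end.

Lemma mem_interior_K33_path a b i j z :
  (a, b) = (@lshift 3 3 i, @rshift 3 3 j) \/ (a, b) = (@rshift 3 3 j, @lshift 3 3 i) ->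
  (z \in interior (K33_path a b)) = (z \in interior (Q i j)).
Proof.
rewrite /K33_path; case=> -[-> ->]; rewrite split_lshift split_rshift //.
by rewrite interior_rev_belast mem_rev.
Qed.

Lemma K33_subdivision : contains_subdivision K33 g.
Proof.
exists K33_branch, K33_path; split.
- move=> a b; rewrite /K33_branch.
  case: (@split_ordP 3 3 a) => i ->; case: (@split_ordP 3 3 b) => j -> //.
  + by move/x_inj->.
  + by move/eqP; rewrite (negbTE (xNy _ _)).
  + by move/esym/eqP; rewrite (negbTE (xNy _ _)).
  + by move/y_inj->.
- move=> a b /K33_edge_shifts[i [j [] [-> ->]]];
    rewrite /K33_branch /K33_path split_lshift split_rshift; first exact: Q_path.
  have [ij_path <- ij_uniq] := Q_path i j.
  by rewrite (path_rev_belast _ _ g_sym) last_rev_belast uniq_rev_belast.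
- move=> a b v /K33_edge_shifts[i [j Eab]].
  rewrite (mem_interior_K33_path _ Eab) /K33_branch.
  by case: (@split 3 3 v) => k; [apply: x_notin_Q | apply: y_notin_Q].
- move=> a b c d /K33_edge_shifts[i [j Eab]] /K33_edge_shifts[i' [j' Ecd]] Nabcd z.
  rewrite (mem_interior_K33_path _ Eab) (mem_interior_K33_path _ Ecd).
  apply: Q_disjoint; apply/eqP => -[Ei Ej]; apply: Nabcd.
  by move: Eab Ecd; rewrite Ei Ej => -[] [-> ->] [] [-> ->]; tauto.
Qed.

End K33Subdivision.

Section Shadow.
Variables (T : finType) (e : rel T).
Hypothesis e_sym : symmetric e.

Lemma shadow_rel_sym : symmetric (shadow_rel e).
Proof. by case=> [u|u] [v|v] //=; rewrite eq_sym e_sym. Qed.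

Lemma path_shadow_inl u p : path (shadow_rel e) (inl u) (map inl p) = path e u p.
Proof. by elim: p u => //= v p IHp u; rewrite IHp. Qed.

(* Read after the shadow w' of the end w of the path b :: q: the path b :: q
   walked backwards, with w replaced by w'. *)
Definition shadow_return (b : T) (q : seq T) : seq (T + T) :=
  map inl (rev (b :: interior q)).

Lemma interior_shadow_return b q :
  interior (shadow_return b q) = map inl (rev (interior q)).
Proof. by rewrite /shadow_return rev_cons map_rcons interior_rcons. Qed.

Lemma last_shadow_return b q z : last z (shadow_return b q) = inl b.
Proof. by rewrite /shadow_return rev_cons map_rcons last_rcons. Qed.

Lemma shadow_return_path b q :
  path e b q -> path (shadow_rel e) (inr (last b q)) (shadow_return b q).
Proof.
case/lastP: q => [|q w]; first by rewrite /= eqxx.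
rewrite rcons_path last_rcons /shadow_return interior_rcons -rev_cons_belast.
case/andP=> bq_path ew /=; rewrite e_sym ew orbT path_shadow_inl.
by rewrite (path_rev_belast _ _ e_sym).
Qed.

Lemma shadow_return_uniq b q :
  uniq (b :: q) -> uniq (inr (last b q) :: shadow_return b q).
Proof.
case/lastP: q => [|q w] //; rewrite -rcons_cons rcons_uniq => /andP[_ bq_uniq].
rewrite /= /shadow_return interior_rcons map_inj_uniq ?rev_uniq ?bq_uniq ?andbT;
  last by move=> ? ? [].
by apply/mapP => -[].
Qed.

End Shadow.

Section ThetaInShadow.
Variables (T : finType) (e : rel T).
Hypothesis e_sym : symmetric e.
Variables (u w : T) (p : 'I_3 -> seq T).
Hypothesis uNw : u != w.
Hypothesis p_path : forall i,
  [/\ path e u (p i), last u (p i) = w & uniq (u :: p i)].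
Hypothesis p_meet : forall i j, i != j -> forall z, z \in p i -> z \in p j -> z = w.
Hypothesis p_long : forall i, i != ord0 -> head u (p i) != w.

Let b i := head u (p i).
Let q i := behead (p i).

Let p_cons i : p i = b i :: q i.
Proof.
by have [_] := p_path i; rewrite /b /q; case: (p i) => //= /eqP; rewrite (negbTE uNw).
Qed.

Let b_in i : b i \in p i.
Proof. by rewrite p_cons mem_head. Qed.

Let bq_path i :
  [/\ e u (b i), path e (b i) (q i), last (b i) (q i) = w & uniq (b i :: q i)].
Proof. by have [] := p_path i; rewrite p_cons /= => /andP[-> ->] -> /andP[]. Qed.

Let b_inj : injective b.
Proof.
move=> i j bij; apply/eqP; apply: contraT => ij.
have bw : b i = w by apply: (p_meet ij (b_in i)); rewrite bij.
have [i0|iN0] := eqVneq i ord0; last by move: (p_long iN0); rewrite -/(b i) bw eqxx.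
have jN0 : j != ord0 by rewrite -i0 eq_sym.
by move: (p_long jN0); rewrite -/(b j) -bij bw eqxx.
Qed.

Let mem_interior_q i v :
  v \in interior (q i) -> [/\ v \in p i, v != w, v != u & forall j, v != b j].
Proof.
have [_ _ bq_last /andP[bNq q_uniq]] := bq_path i.
rewrite (mem_interior (b i)) // bq_last => /andP[vq vNw].
have vp : v \in p i by rewrite p_cons in_cons vq orbT.
have [_ _ /andP[uNp _]] := p_path i.
split=> // [|j]; first by apply: contraNneq uNp => <-.
have [<-|ij] := eqVneq i j; first by apply: contraNneq bNq => <-.
by apply: contra_neq vNw => vb; apply: (p_meet ij vp); rewrite vb.
Qed.

Lemma shadow_K33_of_theta : contains_subdivision K33 (shadow_rel e).
Proof.
pose x := tnth [tuple inl u; inr u; inr w].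
pose y j : T + T := inl (b j).
pose Q i j := if x i == inr w then shadow_return (b j) (q j) else [:: y j].
have x_cases i : [\/ x i = inl u, x i = inr u | x i = inr w].
  have := mem_tnth i [tuple inl u; inr u; inr w].
  by rewrite !inE => /or3P[]/eqP xi; [exact: Or31 | exact: Or32 | exact: Or33].
have x_inj : injective x by apply/tuple_uniqP; rewrite /= !inE /= uNw.
have u_b j : u != b j by have [_ _ /andP[uNp _]] := p_path j; apply: contraNneq uNp => ->.
have xNy i j : x i != y j by case: (x_cases i) => ->; rewrite // /y inj_eq // => ? ? [].
apply: (@K33_subdivision _ _ (shadow_rel_sym e_sym) x y Q x_inj).
- by move=> i j [/b_inj].
- exact: xNy.
- move=> i j; have [ub bq bq_last bq_uniq] := bq_path j.
  rewrite /Q; case: eqP => [-> | xNw].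
  + rewrite -[in inr w]bq_last (shadow_return_path e_sym bq) last_shadow_return.
    by rewrite shadow_return_uniq.
  + rewrite /= inE xNy andbT; split=> //.
    by case: (x_cases i) xNw => -> //= _; rewrite ub ?orbT.
- move=> i j v; rewrite /Q; case: eqP => // _.
  rewrite interior_shadow_return; apply/mapP => -[v' /[!mem_rev] /mem_interior_q[]].
  by case: (x_cases v) => -> _ _ // uv' _ [/eqP]; rewrite eq_sym (negbTE uv').
- move=> i j v; rewrite /Q; case: eqP => // _.
  rewrite interior_shadow_return; apply/mapP => -[v' /[!mem_rev] /mem_interior_q[]].
  by move=> _ _ _ /(_ v) /negbTE vb [/eqP]; rewrite eq_sym vb.
- move=> i j i' j' ij_i'j' z; rewrite /Q.
  case: eqP => [xi|_] //; case: eqP => [xi'|_] //.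
  have jj' : j != j'.
    by apply: contraNneq ij_i'j' => ->; rewrite (x_inj i i') ?xi ?xi'.
  rewrite !interior_shadow_return => /mapP[v /[!mem_rev] vj ->].
  rewrite mem_map ?mem_rev; last by move=> ? ? [].
  have [vp vNw _ _] := mem_interior_q vj.
  by apply: contra vNw => /mem_interior_q[vp' _ _ _]; rewrite (p_meet jj' vp vp').
Qed.

End ThetaInShadow.

Section K4minusRoutes.
Variables (T : finType) (e : rel T) (phi : 'I_4 -> T) (P : 'I_4 -> 'I_4 -> seq T).
Hypothesis phi_inj : injective phi.
Hypothesis P_path : forall a b, K4minus a b ->
  [/\ path e (phi a) (P a b), last (phi a) (P a b) = phi b & uniq (phi a :: P a b)].
Hypothesis P_branch : forall a b v, K4minus a b -> phi v \notin interior (P a b).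
Hypothesis P_disjoint : forall a b c d, K4minus a b -> K4minus c d ->
  ~ ((a = c /\ b = d) \/ (a = d /\ b = c)) ->
  forall z, z \in interior (P a b) -> z \notin interior (P c d).

Let v0 : 'I_4 := ord0.
Let v1 : 'I_4 := Ordinal (isT : 1 < 4).

Definition route (m : 'I_4) : seq T :=
  if m == v1 then P v0 v1 else P v0 m ++ P m v1.

Let K4minus_v0 m : m != v0 -> K4minus v0 m.
Proof. by rewrite /K4minus eq_sym => ->. Qed.

Let K4minus_v1 m : m != v1 -> K4minus m v1.
Proof. by rewrite /K4minus => ->; rewrite /= !andbF. Qed.

Let phi_v0_v1 : phi v0 != phi v1.
Proof. by rewrite inj_eq. Qed.

Let mem_P a b z : K4minus a b -> z \in P a b -> z = phi b \/ z \in interior (P a b).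
Proof.
move=> ab; have [_ <- /andP[_ ab_uniq]] := P_path ab.
by rewrite (mem_interior (phi a)) //; case: eqP => [->|_ ->]; [left | right].
Qed.

Let distinct_edges (a b c d : 'I_4) : (a != c) || (b != d) -> (a != d) || (b != c) ->
  ~ ((a = c /\ b = d) \/ (a = d /\ b = c)).
Proof. by move=> acbd adbc [[ac bd]|[ad bc]]; subst; rewrite !eqxx in acbd adbc. Qed.

Let P_interiors (a b c d : 'I_4) z : K4minus a b -> K4minus c d ->
  (a != c) || (b != d) -> (a != d) || (b != c) ->
  z \in interior (P a b) -> z \in interior (P c d) -> False.
Proof.
move=> ab cd acbd adbc zab; apply/negP.
exact: (P_disjoint ab cd (distinct_edges acbd adbc)).
Qed.

Let phi_notin_P a b v : K4minus a b -> phi v \in interior (P a b) -> False.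
Proof. by move=> ab; apply/negP/P_branch. Qed.

Lemma route_path m : m != v0 ->
  [/\ path e (phi v0) (route m), last (phi v0) (route m) = phi v1
    & uniq (phi v0 :: route m)].
Proof.
move=> m0; rewrite /route; case: eqP => [_|/eqP m1]; first exact: P_path.
have [p0m l0m u0m] := P_path (K4minus_v0 m0).
have [pm1 lm1 /andP[_ um1]] := P_path (K4minus_v1 m1).
have {}um1 : uniq (P m v1) := um1.
rewrite cat_path last_cat l0m p0m pm1 lm1 -cat_cons cat_uniq u0m um1 !andbT.
split=> //.
apply/hasPn => z /(mem_P (K4minus_v1 m1)) [->|zm1]; rewrite in_cons negb_or.
  rewrite eq_sym phi_v0_v1; apply/negP => /(mem_P (K4minus_v0 m0)) [|].
    by move/phi_inj/eqP; rewrite eq_sym (negbTE m1).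
  exact: phi_notin_P (K4minus_v0 m0).
apply/andP; split.
  by apply: contraPneq zm1 => ->; apply: phi_notin_P (K4minus_v1 m1).
apply/negP => /(mem_P (K4minus_v0 m0)) [zm|z0m].
  by rewrite zm in zm1; apply: phi_notin_P (K4minus_v1 m1) zm1.
by apply: (P_interiors (K4minus_v0 m0) (K4minus_v1 m1) _ _ z0m zm1); rewrite ?(eq_sym v0) ?m0.
Qed.

Lemma mem_route m z : m != v0 -> z \in route m -> z != phi v1 ->
  [\/ z = phi m, z \in interior (P v0 m) | (m != v1) && (z \in interior (P m v1))].
Proof.
move=> m0; rewrite /route; case: eqP => [m1|/eqP m1].
  subst m; case/(mem_P (K4minus_v0 m0)) => [->|z01 _]; [by rewrite eqxx | exact: Or32].
rewrite mem_cat => /orP[/(mem_P (K4minus_v0 m0))|/(mem_P (K4minus_v1 m1))] [] z_eq //.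
- by move=> _; apply: Or31.
- by move=> _; apply: Or32.
- by rewrite z_eq eqxx.
- by move=> _; apply: Or33.
Qed.

Let phi_in_route k m : m != v0 -> phi k \in route m -> phi k != phi v1 -> k = m.
Proof.
move=> m0 km /(mem_route m0 km) [/phi_inj // | | /andP[m1]].
  by move/phi_notin_P => /(_ (K4minus_v0 m0)).
by move/phi_notin_P => /(_ (K4minus_v1 m1)).
Qed.

Lemma route_meet m m' z : m != v0 -> m' != v0 -> m != m' ->
  z \in route m -> z \in route m' -> z = phi v1.
Proof.
move=> m0 m'0 mm' zm zm'; have [//|z1] := eqVneq z (phi v1); exfalso.
have v0m' : v0 != m' by rewrite eq_sym.
have [zE|z0m|/andP[m1 zm1]] := mem_route m0 zm z1.
- by rewrite zE in zm' z1; move: mm'; rewrite (phi_in_route m'0 zm' z1) eqxx.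
- have [zE|z0m'|/andP[m'1 zm'1]] := mem_route m'0 zm' z1.
  + by rewrite zE in z0m; case: (phi_notin_P (K4minus_v0 m0) z0m).
  + by apply: (P_interiors (K4minus_v0 m0) (K4minus_v0 m'0) _ _ z0m z0m'); rewrite ?mm' ?v0m'.
  + by apply: (P_interiors (K4minus_v0 m0) (K4minus_v1 m'1) _ _ z0m zm'1); rewrite ?mm' ?v0m'.
- have [zE|z0m'|/andP[m'1 zm'1]] := mem_route m'0 zm' z1.
  + by rewrite zE in zm1; case: (phi_notin_P (K4minus_v1 m1) zm1).
  + by apply: (P_interiors (K4minus_v1 m1) (K4minus_v0 m'0) _ _ zm1 z0m'); rewrite ?mm' ?m0.
  + by apply: (P_interiors (K4minus_v1 m1) (K4minus_v1 m'1) _ _ zm1 zm'1); rewrite ?mm' ?m1.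
Qed.

Lemma head_route m : m != v0 -> m != v1 -> head (phi v0) (route m) != phi v1.
Proof.
move=> m0 m1; rewrite /route (negbTE m1).
have [_ l0m _] := P_path (K4minus_v0 m0).
case E: (P v0 m) l0m => [|z s] /= => [/phi_inj/eqP|_]; first by rewrite eq_sym (negbTE m0).
have /(mem_P (K4minus_v0 m0)) [->|z0m] : z \in P v0 m by rewrite E mem_head.
  by rewrite inj_eq.
by apply: contraPneq z0m => ->; apply/negP/P_branch/K4minus_v0.
Qed.

Lemma shadow_K33_of_K4minus : symmetric e -> contains_subdivision K33 (shadow_rel e).
Proof.
move=> e_sym; have lift_v0 (i : 'I_3) : lift ord0 i != v0 by rewrite eq_sym neq_lift.
apply: (shadow_K33_of_theta e_sym (u := phi v0) (w := phi v1) (p := route \o lift ord0)).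
- by rewrite inj_eq.
- by move=> i; apply: route_path (lift_v0 i).
- move=> i j ij z; apply: (route_meet (lift_v0 i) (lift_v0 j)).
  by rewrite (inj_eq (@lift_inj _ ord0)).
- by move=> i iN0; apply: head_route (lift_v0 i) iN0.
Qed.

End K4minusRoutes.

Theorem lemma5p5 (T : finType) (e : rel T) :
  simple_graph e ->
  contains_subdivision K4minus e ->
  contains_subdivision K33 (shadow_rel e).
Proof.
case=> e_sym _ [phi [P [phi_inj P_path P_branch P_disjoint]]].
exact: (shadow_K33_of_K4minus phi_inj P_path P_branch P_disjoint e_sym).
Qed.
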